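(* Let $f\colon[0,1]\to[0,1]$ be a unary aggregation function, let $D(f)=\{c\in\,]0,1[\,:\ \bigvee_{x<c}f(x)<f(c)\}$, and for $a\in\,]0,1[$ let $h^f_a(x)=G^1_{f(a)}(x)\wedge\chi_a(x)$. Then for all $x\in[0,1]$, $$f(x)=\bigvee_{q\in\mathbb{Q}\cap]0,1[}h^f_q(x)\ \vee\ \bigvee_{c\in D(f)}h^f_c(x).$$
   Context: A unary aggregation function on $[0,1]$ is a nondecreasing function $f\colon[0,1]\to[0,1]$ with $f(0)=0$, $f(1)=1$. For $a\in[0,1]$, $\chi_a(x)=1$ if $x\ge a$ and $x\neq0$, and $\chi_a(x)=0$ otherwise. For $b\in[0,1]$, $G^1_b(x)=\mathsf{Med}_b(\chi_0(x),\chi_1(x))$, where $\mathsf{Med}_b(x,y)$ is the median of $x,y,b$ (so $G^1_b(0)=0$, $G^1_b(1)=1$, $G^1_b(x)=b$ for $x\in\,]0,1[$). The supremum over the empty set is $0$. *)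

From mathcomp Require Import all_boot all_order all_algebra.
From mathcomp Require Import all_classical all_reals.
Set Implicit Arguments. Unset Strict Implicit. Unset Printing Implicit Defensive.
Import Order.TTheory GRing.Theory Num.Theory.
Local Open Scope ring_scope.
Local Open Scope classical_set_scope.

(* unary aggregation function on [0,1] (f : R -> R, only its values on [0,1] matter) *)
Definition aggregation1 (R : realType) (f : R -> R) : Prop :=
  (forall x, 0 <= x <= 1 -> 0 <= f x <= 1) /\
  (forall x y, 0 <= x -> x <= y -> y <= 1 -> f x <= f y) /\
  f 0 = 0 /\ f 1 = 1.

Definition chi (R : realType) (a x : R) : R :=
  if (a <= x) && (x != 0) then 1 else 0.

Definition Med (R : realType) (b x y : R) : R :=
  Num.max (Num.min x y) (Num.min (Num.max x y) b).

Definition G1 (R : realType) (b x : R) : R := Med b (chi 0 x) (chi 1 x).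

Definition Dset (R : realType) (f : R -> R) : set R :=
  [set c | 0 < c < 1 /\ sup (f @` [set x | 0 <= x < c]) < f c].

Definition hf (R : realType) (f : R -> R) (a x : R) : R :=
  Num.min (G1 (f a) x) (chi a x).

From mathcomp Require Import all_boot all_order all_algebra.
From mathcomp Require Import all_classical all_reals.
Import Order.TTheory GRing.Theory Num.Theory.
Local Open Scope ring_scope.
Local Open Scope classical_set_scope.

(* For 0 < a < 1, h^f_a vanishes on [0, a[, equals f a on [a, 1[ and agrees
   with f at 0 and 1, so it lies below the nondecreasing f on [0, 1].
   Conversely, at 0 and 1 any rational term attains f; at an interior x in
   D(f) the term h^f_x attains f x; at an interior x outside D(f), f x is at
   most the supremum of f on [0, x[, and each f y with y < x is at most
   f q = h^f_q(x) for a rational q in ]y, x[. *)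

Lemma itvcc01_cases {R : numDomainType} {x : R} :
  0 <= x <= 1 -> [\/ x = 0, x = 1 | 0 < x < 1].
Proof.
case/andP=> x0 x1; have [->|xn0] := eqVneq x 0; first by constructor 1.
have [->|xn1] := eqVneq x 1; first by constructor 2.
by constructor 3; rewrite !lt_neqAle eq_sym xn0 xn1 x0 x1.
Qed.

Section G1Values.
Context {R : realType}.
Implicit Types a b x : R.

Lemma chi_le1 a x : chi a x <= 1.
Proof. by rewrite /chi; case: ifP; rewrite ?ler01. Qed.

Lemma G1_at0 b : G1 b 0 = 0.
Proof. by rewrite /G1 /Med /chi eqxx /= !andbF minxx maxxx max_l // ge_min lexx. Qed.

Lemma G1_at1 b : G1 b 1 = 1.
Proof. by rewrite /G1 /Med /chi oner_neq0 ler01 lexx /= !minxx maxxx max_l // ge_min lexx. Qed.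

Lemma G1_interior b x : 0 <= b <= 1 -> 0 < x < 1 -> G1 b x = b.
Proof.
move=> /andP[b0 b1] /andP[x0 x1].
rewrite /G1 /Med /chi (ltW x0) (gt_eqF x0) leNgt x1 /=.
by rewrite (min_r ler01) (max_l ler01) (min_r b1) (max_r b0).
Qed.

Context {f : R -> R}.

Lemma hf_le1 a x : hf f a x <= 1.
Proof. by rewrite /hf ge_min chi_le1 orbT. Qed.

Lemma hf_at0 a : hf f a 0 = 0.
Proof. by rewrite /hf G1_at0 /chi eqxx andbF minxx. Qed.

Lemma hf_at1 a : a <= 1 -> hf f a 1 = 1.
Proof. by move=> a1; rewrite /hf G1_at1 /chi a1 oner_neq0 minxx. Qed.

Lemma hf_interior a x : 0 <= f a <= 1 -> 0 < x < 1 ->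
  hf f a x = if a <= x then f a else 0.
Proof.
move=> /[dup] /andP[fa0 fa1] fa01 /[dup] /andP[x0 _] x01.
rewrite /hf G1_interior // /chi (gt_eqF x0) andbT.
by case: ifP => _; [rewrite min_l | rewrite min_r].
Qed.

Lemma le_sup_hf_family {I : Type} {A : set I} {g : I -> R} {x : R} (i : I) {y : R} :
  A i -> y <= hf f (g i) x -> y <= sup [set hf f (g i) x | i in A].
Proof.
move=> Ai /le_trans; apply; apply: sup_upper_bound; last by exists i.
by split; [exists (hf f (g i) x), i | exists 1 => _ [j _ <-]; apply: hf_le1].
Qed.

End G1Values.

Lemma ratr_itvoo01 (R : realType) (q : rat) : (0 < (ratr q : R) < 1) = (0 < q < 1).
Proof. by rewrite ltr0q -(rmorph1 (@ratr R)) ltr_rat. Qed.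

Section AggregationFunction.
Context {R : realType} {f : R -> R} (aggf : aggregation1 f).

Lemma aggregation1_range x : 0 <= x <= 1 -> 0 <= f x <= 1.
Proof. by case: aggf => f_range _; apply: f_range. Qed.

Lemma aggregation1_mono x y : 0 <= x -> x <= y -> y <= 1 -> f x <= f y.
Proof. by case: aggf => _ [f_mono _]; apply: f_mono. Qed.

Lemma aggregation1_at0 : f 0 = 0. Proof. by case: aggf => _ [_ []]. Qed.

Lemma aggregation1_at1 : f 1 = 1. Proof. by case: aggf => _ [_ []]. Qed.

Lemma hf_le a x : 0 < a < 1 -> 0 <= x <= 1 -> hf f a x <= f x.
Proof.
move=> /andP[a0 a1] x01.
case: (itvcc01_cases x01) => [->|->|x01'].
- by rewrite hf_at0 aggregation1_at0.
- by rewrite hf_at1 ?aggregation1_at1 // ltW.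
- have fa01 : 0 <= f a <= 1 by apply: aggregation1_range; rewrite !ltW.
  rewrite hf_interior //; case: ifP => [ax|_].
    by case/andP: x01 => _ x1; apply: aggregation1_mono; rewrite // ltW.
  by case/andP: (aggregation1_range _ x01).
Qed.

Lemma sup_hf_family_le {I : Type} {A : set I} {g : I -> R} {x : R} :
  (forall i, A i -> 0 < g i < 1) -> 0 <= x <= 1 ->
  sup [set hf f (g i) x | i in A] <= f x.
Proof.
move=> gA01 x01.
have [->|/set0P nonempty] := eqVneq [set hf f (g i) x | i in A] set0.
  by rewrite sup0; case/andP: (aggregation1_range _ x01).
by apply: ge_sup nonempty _ => _ [i /gA01 gi01 <-]; apply: hf_le.
Qed.

Lemma sup_left_le_sup_hf_rat x : 0 < x < 1 ->
  sup (f @` [set y | 0 <= y < x]) <=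
  sup [set hf f (ratr q) x | q in [set q : rat | 0 < q < 1]].
Proof.
move=> /[dup] x01 /andP[x0 x1].
apply: ge_sup; first by exists (f 0), 0; rewrite //= lexx.
move=> _ [y /andP[y0 yx] <-].
have [q] := rat_in_itvoo yx; rewrite in_itv /= => /andP[yq qx].
have q0 : 0 < (ratr q : R) by apply: le_lt_trans yq.
have q1 : (ratr q : R) < 1 by apply: lt_trans x1.
apply: (le_sup_hf_family q).
  by rewrite /= -(ratr_itvoo01 R) q0 q1.
have fq01 : 0 <= f (ratr q) <= 1 by apply: aggregation1_range; rewrite !ltW.
rewrite hf_interior // (ltW qx).
by apply: aggregation1_mono; rewrite // ltW.
Qed.

End AggregationFunction.

Lemma exists_rat_itvoo01 : exists q : rat, 0 < q < 1.
Proof. by exists 2%:R^-1; rewrite invr_gt0 ltr0n invf_lt1 ?ltr0n ?ltr1n. Qed.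

Lemma Dset_itvoo01 (R : realType) (f : R -> R) c : Dset f c -> 0 < c < 1.
Proof. by case. Qed.

Theorem lemma5 (R : realType) (f : R -> R) :
  aggregation1 f ->
  forall x : R, 0 <= x <= 1 ->
    f x = Num.max
            (sup [set hf f (ratr q) x | q in [set q : rat | 0 < q < 1]])
            (sup [set hf f c x | c in Dset f]).
Proof.
move=> aggf x x01.
have ratr01 q : 0 < q < 1 -> 0 < (ratr q : R) < 1 by rewrite ratr_itvoo01.
apply/eqP; rewrite eq_le ge_max (sup_hf_family_le aggf ratr01 x01).
rewrite (sup_hf_family_le aggf (@Dset_itvoo01 R f) x01) !andbT le_max.
have [q0 q0_01] := exists_rat_itvoo01.
have /andP[_ /ltW q0_le1] := ratr01 q0 q0_01.
case: (itvcc01_cases x01) => [->|->|x01'].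
- by rewrite (le_sup_hf_family q0) // hf_at0 (aggregation1_at0 aggf).
- by rewrite (le_sup_hf_family q0) // hf_at1 // (aggregation1_at1 aggf).
- have [xD|xnD] := pselect (Dset f x).
    rewrite (le_sup_hf_family x) ?orbT //.
    by rewrite hf_interior ?lexx // (aggregation1_range aggf).
  have /negP : ~ (sup (f @` [set y | 0 <= y < x]) < f x) by move=> lt; apply: xnD.
  by rewrite -leNgt => /le_trans ->; last exact: sup_left_le_sup_hf_rat.
Qed.
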